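(* Let $\xi=(\xi_1,\xi_2)$ be uniformly distributed on $\Theta:=([-1,1]\times[0,1])\cup([0,1]\times[-1,0])\subset\mathbb{R}^2$ and let $p=1/3$. Policies are pairs $y=(y_1,y_2(\cdot))$ with $y_1\in\mathbb{R}$ and $y_2:\mathbb{R}\to\mathbb{R}$ Borel measurable, and $h(y):=y_1$. Let $M_1:=\{y: \mathbb{P}(\xi_1\le y_1,\ \xi_2\le y_2(\xi_1))\ge 1/3,\ y_1\in[0,1],\ y_2(\xi_1)\in[0,1]\ \mathbb{P}\text{-a.s.}\}$, $M_2:=\{y:\mathbb{P}(\xi_1\le y_1,\ \xi_2\le y_2(\xi_1),\ y_1\in[0,1],\ y_2(\xi_1)\in[0,1])\ge 1/3\}$, $\Pi(y_1,y_2(\cdot)):=(\max\{0,\min\{y_1,1\}\},\max\{0,\min\{y_2(\cdot),1\}\})$, and $\mathcal{K}:=\{(y_1,y_2): y_1\in\mathbb{R},\ \exists a\ge -1 \text{ with } y_2(\xi_1)=a\xi_1\}$. With $\varphi,\varphi_1,\varphi_2,\varphi_3,\varphi_4$ defined as: $\varphi:=\inf\{h(y):y\in M_1\}$, $\varphi_1:=\inf\{h(y):y\in M_1\cap\mathcal{K}\}$, $\varphi_2:=\inf\{h(z):z\in\Pi(\arg\min\{h(y):y\in M_2\cap\mathcal{K}\})\}$, $\varphi_3:=\inf\{h(y):y\in\Pi(M_2\cap\mathcal{K})\}$, $\varphi_4:=\inf\{h(y):y\in M_1\cap\Pi(\mathcal{K})\}$, one has \[ \varphi=0,\quad \varphi_1=1,\quad\varphi_2=\varphi_3=2/3,\quad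 \varphi_4=1/2. \] Moreover, $(2/3,\tfrac32\xi_1)$ is the unique minimizer of $h$ over $M_2\cap\mathcal{K}$, $\Pi(2/3,\tfrac32\xi_1)=(2/3,\max\{0,\min\{\tfrac32\xi_1,1\}\})$ solves the problem defining $\varphi_3$, and $\varphi_4$ is attained at $(1/2,\max\{0,\min\{-\xi_1,1\}\})=\Pi(1/2,-\xi_1)$. *)

From Stdlib Require Import Reals.
Open Scope R_scope.

Definition is_glb (S : R -> Prop) (m : R) : Prop :=
  (forall x, S x -> m <= x) /\ (forall m', (forall x, S x -> m' <= x) -> m' <= m).

Definition sigma_algebra (F : (R -> Prop) -> Prop) : Prop :=
  F (fun _ => True) /\
  (forall A, F A -> F (fun x => ~ A x)) /\
  (forall An : nat -> R -> Prop, (forall n, F (An n)) -> F (fun x => exists n, An n x)).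

Definition borel_set (A : R -> Prop) : Prop :=
  forall F, sigma_algebra F -> (forall a b, F (fun x => a < x < b)) -> F A.

Definition borel_measurable (f : R -> R) : Prop :=
  forall B, borel_set B -> borel_set (fun x => B (f x)).

Record rect := mkRect { rx1 : R; rx2 : R; ry1 : R; ry2 : R }.
Definition in_rect (r : rect) (x y : R) : Prop :=
  rx1 r <= x <= rx2 r /\ ry1 r <= y <= ry2 r.
Definition area (r : rect) : R := (rx2 r - rx1 r) * (ry2 r - ry1 r).
Definition proper_rect (r : rect) : Prop := rx1 r <= rx2 r /\ ry1 r <= ry2 r.

Fixpoint area_sum (c : nat -> rect) (N : nat) : R :=
  match N with
  | O => area (c O)
  | S k => area_sum c k + area (c (S k))
  end.

Definition cover_le (A : R -> R -> Prop) (s : R) : Prop :=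
  exists c : nat -> rect,
    (forall n, proper_rect (c n)) /\
    (forall x y, A x y -> exists n, in_rect (c n) x y) /\
    (forall N, area_sum c N <= s).

(* m is the Lebesgue outer measure of A (coincides with Lebesgue measure on
   measurable, e.g. Borel, sets) *)
Definition lebesgue_outer (A : R -> R -> Prop) (m : R) : Prop :=
  is_glb (cover_le A) m.

Definition Theta (x y : R) : Prop :=
  (-1 <= x <= 1 /\ 0 <= y <= 1) \/ (0 <= x <= 1 /\ -1 <= y <= 0).

(* Prob E p : P(xi \in E) = p, i.e. |E cap Theta| / 3 = p *)
Definition Prob (E : R -> R -> Prop) (p : R) : Prop :=
  lebesgue_outer (fun x y => E x y /\ Theta x y) (3 * p).

Definition almost_surely (E : R -> R -> Prop) : Prop :=
  Prob (fun x y => ~ E x y) 0.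

Definition policy : Type := (R * (R -> R))%type.
Definition h (y : policy) : R := fst y.
Definition clamp (t : R) : R := Rmax 0 (Rmin t 1).
Definition Pi (y : policy) : policy := (clamp (fst y), fun t => clamp (snd y t)).

Definition in01 (t : R) : Prop := 0 <= t <= 1.

Definition M1 (y : policy) : Prop :=
  borel_measurable (snd y) /\
  (exists p, Prob (fun x1 x2 => x1 <= fst y /\ x2 <= snd y x1) p /\ 1/3 <= p) /\
  in01 (fst y) /\
  almost_surely (fun x1 _ => in01 (snd y x1)).

Definition M2 (y : policy) : Prop :=
  borel_measurable (snd y) /\
  (exists p, Prob (fun x1 x2 => x1 <= fst y /\ x2 <= snd y x1 /\
                                 in01 (fst y) /\ in01 (snd y x1)) p /\ 1/3 <= p).

Definition K (y : policy) : Prop :=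
  exists a, -1 <= a /\ forall t, snd y t = a * t.

Definition inter (A B : policy -> Prop) (y : policy) : Prop := A y /\ B y.
Definition image_Pi (A : policy -> Prop) (z : policy) : Prop :=
  exists y, A y /\ z = Pi y.
Definition argmin_h (A : policy -> Prop) (y : policy) : Prop :=
  A y /\ forall y', A y' -> h y <= h y'.
Definition hvals (A : policy -> Prop) (v : R) : Prop := exists y, A y /\ v = h y.

Definition phi  (v : R) : Prop := is_glb (hvals M1) v.
Definition phi1 (v : R) : Prop := is_glb (hvals (inter M1 K)) v.
Definition phi2 (v : R) : Prop := is_glb (hvals (image_Pi (argmin_h (inter M2 K)))) v.
Definition phi3 (v : R) : Prop := is_glb (hvals (image_Pi (inter M2 K))) v.
Definition phi4 (v : R) : Prop := is_glb (hvals (inter M1 (image_Pi K))) v.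

From Stdlib Require Import Reals Lra Lia List Classical FunctionalExtensionality PropExtensionality.
Open Scope R_scope.

(* Since P(xi in E) = |E n Theta| / 3, every value is an area computation.  For a linear
   second stage y2 = a xi1, the almost-sure constraint of M1 forces a = 0, and then the event
   has area at most y1, so y1 = 1.  In M2 a negative slope leaves at most area 1/2, a zero
   slope area y1, and a positive slope the trapezoid under a x over [0, min(y1, 1/a)], whose
   area reaches 1 only if y1 >= 2/3, with equality exactly for a = 3/2.  After projection a
   slope a >= -1 gives at most the triangle under -x plus a rectangle of width y1, hence
   y1 >= 1/2.  Areas are bounded above by finite covers and below by staircases of columns;
   since the outer measure is defined by countable covers, the lower bound needs compactness
   of rectangles and a Fubini argument for step functions. *)

Ltac minmax := unfold Rmax, Rmin in *; repeat destruct Rle_dec; try lra.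

Lemma sum_f_R0_ge0 f N : (forall n, (n <= N)%nat -> 0 <= f n) -> 0 <= sum_f_R0 f N.
Proof.
  induction N as [|N IH]; simpl; intros H; [apply H; lia|].
  pose proof (IH (fun n Hn => H n ltac:(lia))); pose proof (H (S N) ltac:(lia)); lra.
Qed.

Lemma sum_f_R0_ge_term f N n :
  (forall k, (k <= N)%nat -> 0 <= f k) -> (n <= N)%nat -> f n <= sum_f_R0 f N.
Proof.
  induction N as [|N IH]; simpl; intros H Hn.
  - replace n with 0%nat by lia; lra.
  - destruct (Nat.eq_dec n (S N)) as [->|].
    + pose proof (sum_f_R0_ge0 f N (fun k Hk => H k ltac:(lia))); lra.
    + pose proof (IH (fun k Hk => H k ltac:(lia)) ltac:(lia)); pose proof (H (S N) ltac:(lia)); lra.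
Qed.

Fixpoint nsum (f : nat -> nat) (N : nat) : nat :=
  match N with O => f O | S k => (nsum f k + f (S k))%nat end.

Lemma nsum_le f g N :
  (forall n, (n <= N)%nat -> (f n <= g n)%nat) -> (nsum f N <= nsum g N)%nat.
Proof.
  induction N as [|N IH]; simpl; intros H; [apply H; lia|].
  pose proof (IH (fun n Hn => H n ltac:(lia))); pose proof (H (S N) ltac:(lia)); lia.
Qed.

Lemma nsum_lt f g N n0 :
  (forall n, (n <= N)%nat -> (f n <= g n)%nat) -> (n0 <= N)%nat ->
  (f n0 < g n0)%nat -> (nsum f N < nsum g N)%nat.
Proof.
  induction N as [|N IH]; simpl; intros H H0 H1.
  - replace n0 with 0%nat in H1 by lia; lia.
  - destruct (Nat.eq_dec n0 (S N)) as [->|].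
    + pose proof (nsum_le f g N (fun n Hn => H n ltac:(lia))); lia.
    + pose proof (IH (fun n Hn => H n ltac:(lia)) ltac:(lia) H1).
      pose proof (H (S N) ltac:(lia)); lia.
Qed.

Lemma nsum_ge_term f N n : (n <= N)%nat -> (f n <= nsum f N)%nat.
Proof.
  induction N as [|N IH]; simpl; intros Hn; [replace n with 0%nat by lia; lia|].
  destruct (Nat.eq_dec n (S N)) as [->|]; [lia|].
  pose proof (IH ltac:(lia)); lia.
Qed.

Lemma nsum_zero f N : (forall n, (n <= N)%nat -> f n = 0%nat) -> nsum f N = 0%nat.
Proof.
  induction N as [|N IH]; simpl; intros H; [apply H; lia|].
  rewrite IH, (H (S N)); auto; intros; apply H; lia.
Qed.

(** * Covering an interval by weighted intervals *)

Definition overlap (l r a b : R) : R := Rmax 0 (Rmin r b - Rmax l a).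

Lemma overlap_ge0 l r a b : 0 <= overlap l r a b.
Proof. unfold overlap; minmax. Qed.

Lemma overlap_le_length l r a b : l <= r -> overlap l r a b <= r - l.
Proof. unfold overlap; minmax. Qed.

Lemma overlap_split l r a e b :
  a <= e <= b -> overlap l r a e + overlap l r e b = overlap l r a b.
Proof. unfold overlap; minmax. Qed.

Lemma overlap_shrink_left l r a a' b : a <= a' -> overlap l r a' b <= overlap l r a b.
Proof. unfold overlap; minmax. Qed.

Lemma overlap_inside l r a b : l <= a -> a <= b -> b <= r -> overlap l r a b = b - a.
Proof. unfold overlap; minmax. Qed.

Definition indicator (l r x w : R) : R :=
  if Rle_dec l x then if Rle_dec x r then w else 0 else 0.

Lemma indicator_ge0 l r x w : 0 <= w -> 0 <= indicator l r x w.
Proof. unfold indicator; repeat destruct Rle_dec; lra. Qed.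

Definition strictly_inside (a b t : R) : nat :=
  if Rlt_dec a t then if Rlt_dec t b then 1%nat else 0%nat else 0%nat.

Definition endpoints_inside (l r : nat -> R) (N : nat) (a b : R) : nat :=
  nsum (fun n => strictly_inside a b (l n) + strictly_inside a b (r n))%nat N.

Lemma strictly_inside_shrink a b a' b' t :
  a <= a' -> b' <= b -> (strictly_inside a' b' t <= strictly_inside a b t)%nat.
Proof. intros; unfold strictly_inside; repeat destruct Rlt_dec; try lia; lra. Qed.

Lemma endpoints_inside_split (l r : nat -> R) N a b a' b' n e :
  (n <= N)%nat -> a < e < b -> (e = l n \/ e = r n) ->
  a <= a' -> b' <= b -> (a' = e \/ b' = e) ->
  (endpoints_inside l r N a' b' < endpoints_inside l r N a b)%nat.
Proof.
  intros Hn He Hlr Ha Hb Hab. unfold endpoints_inside.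
  pose proof (strictly_inside_shrink a b a' b' (l n) Ha Hb).
  pose proof (strictly_inside_shrink a b a' b' (r n) Ha Hb).
  assert (strictly_inside a' b' e = 0%nat)
    by (unfold strictly_inside; repeat destruct Rlt_dec; lra || lia).
  assert (strictly_inside a b e = 1%nat)
    by (unfold strictly_inside; repeat destruct Rlt_dec; lra || lia).
  apply nsum_lt with n; auto; [|destruct Hlr as [<-|<-]; lia].
  intros m _.
  pose proof (strictly_inside_shrink a b a' b' (l m) Ha Hb).
  pose proof (strictly_inside_shrink a b a' b' (r m) Ha Hb); lia.
Qed.

(* Without endpoints in (a, b), each interval either contains [a, b] or misses its midpoint. *)
Lemma weighted_cover_no_endpoint N (l r w : nat -> R) W a b :
  a <= b -> (forall n, 0 <= w n) ->
  (forall n, (n <= N)%nat -> ~ (a < l n < b) /\ ~ (a < r n < b)) ->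
  W <= sum_f_R0 (fun n => indicator (l n) (r n) ((a + b) / 2) (w n)) N ->
  W * (b - a) <= sum_f_R0 (fun n => w n * overlap (l n) (r n) a b) N.
Proof.
  intros Hab Hw Hno Hmid.
  destruct (Req_dec a b) as [<-|Hne].
  { rewrite Rminus_diag, Rmult_0_r. apply sum_f_R0_ge0; intros.
    apply Rmult_le_pos; [apply Hw|apply overlap_ge0]. }
  apply Rle_trans with (sum_f_R0 (fun n => indicator (l n) (r n) ((a + b) / 2) (w n)) N * (b - a));
    [apply Rmult_le_compat_r; lra|].
  rewrite Rmult_comm, scal_sum. apply sum_Rle. intros n Hn.
  destruct (Hno n Hn) as [H1 H2]. pose proof (Hw n). pose proof (overlap_ge0 (l n) (r n) a b).
  unfold indicator; destruct Rle_dec; [destruct Rle_dec|]; try nra.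
  rewrite overlap_inside by lra. lra.
Qed.

Lemma weighted_cover_count k N (l r w : nat -> R) W a b :
  (endpoints_inside l r N a b <= k)%nat -> a <= b -> (forall n, 0 <= w n) ->
  (forall x, a <= x <= b -> W <= sum_f_R0 (fun n => indicator (l n) (r n) x (w n)) N) ->
  W * (b - a) <= sum_f_R0 (fun n => w n * overlap (l n) (r n) a b) N.
Proof.
  revert a b. induction k as [|k IH]; intros a b Hc Hab Hw Hp.
  - apply weighted_cover_no_endpoint; auto; [|apply Hp; lra].
    intros n Hn.
    pose proof (nsum_ge_term (fun n => strictly_inside a b (l n) + strictly_inside a b (r n))%nat N n Hn).
    unfold endpoints_inside in Hc; simpl in *.
    unfold strictly_inside in *; split; intro; repeat destruct Rlt_dec; try lia; lra.
  - destruct (classic (exists n e, (n <= N)%nat /\ a < e < b /\ (e = l n \/ e = r n)))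
      as [[n [e [Hn [He Hlr]]]]|Hno].
    + pose proof (endpoints_inside_split l r N a b a e n e Hn He Hlr ltac:(lra) ltac:(lra) ltac:(auto)).
      pose proof (endpoints_inside_split l r N a b e b n e Hn He Hlr ltac:(lra) ltac:(lra) ltac:(auto)).
      pose proof (IH a e ltac:(lia) ltac:(lra) Hw ltac:(intros; apply Hp; lra)).
      pose proof (IH e b ltac:(lia) ltac:(lra) Hw ltac:(intros; apply Hp; lra)).
      replace (fun m => w m * overlap (l m) (r m) a b) with
        (fun m => w m * overlap (l m) (r m) a e + w m * overlap (l m) (r m) e b).
      2:{ apply functional_extensionality; intro m.
          rewrite <- (overlap_split (l m) (r m) a e b) by lra; ring. }
      rewrite sum_plus. lra.
    + apply IH; auto.
      assert (endpoints_inside l r N a b = 0%nat) as -> ; [|lia].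
      apply nsum_zero; intros m Hm; unfold strictly_inside.
      repeat destruct Rlt_dec; try lia; exfalso; apply Hno;
        first [exists m, (l m); repeat split; auto; lra
              | exists m, (r m); repeat split; auto; lra].
Qed.

(* A one-dimensional Fubini inequality: integrate the pointwise bound over [a, b]. *)
Lemma weighted_cover_length N (l r w : nat -> R) W a b :
  a <= b -> (forall n, 0 <= w n) ->
  (forall x, a <= x <= b -> W <= sum_f_R0 (fun n => indicator (l n) (r n) x (w n)) N) ->
  W * (b - a) <= sum_f_R0 (fun n => w n * overlap (l n) (r n) a b) N.
Proof. apply (weighted_cover_count (endpoints_inside l r N a b)); lia. Qed.

(** * Compactness of segments *)

Lemma uniform_on_segment (a b : R) (G : nat -> R -> Prop) : a <= b ->
  (forall N N' x, (N <= N')%nat -> G N x -> G N' x) ->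
  (forall x, a <= x <= b -> exists N d, 0 < d /\ forall x', Rabs (x' - x) < d -> G N x') ->
  exists N, forall x, a <= x <= b -> G N x.
Proof.
  intros Hab Hm Hl.
  set (S := fun t => a <= t <= b /\ exists N, forall x, a <= x <= t -> G N x).
  assert (HSa : S a).
  { destruct (Hl a ltac:(lra)) as [N [d [Hd HG]]]. split; [lra|].
    exists N. intros x Hx. apply HG. replace (x - a) with 0 by lra. rewrite Rabs_R0; lra. }
  destruct (completeness S) as [s [Hs1 Hs2]]; [exists b; intros t [Ht _]; lra|eauto|].
  assert (Has : a <= s) by (apply Hs1, HSa).
  assert (Hsb : s <= b) by (apply Hs2; intros t [Ht _]; lra).
  destruct (Hl s ltac:(lra)) as [Ns [d [Hd HG]]].
  assert (Ht : exists t, S t /\ s - d < t).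
  { apply NNPP; intro Hn. assert (s <= s - d); [|lra].
    apply Hs2. intros t Ht. apply Rnot_lt_le. intro; apply Hn; eauto. }
  destruct Ht as [t [[Ht1 [Nt HNt]] Ht2]].
  assert (Ht3 : t <= s) by (apply Hs1; split; eauto).
  set (u := Rmin (s + d / 2) b).
  assert (Hu : forall x, a <= x <= u -> G (Nat.max Nt Ns) x).
  { intros x Hx. destruct (Rle_dec x t).
    - apply Hm with Nt; [lia|]. apply HNt; lra.
    - apply Hm with Ns; [lia|]. apply HG. unfold u in Hx.
      pose proof (Rmin_l (s + d / 2) b). apply Rabs_def1; lra. }
  destruct (Rle_dec b u).
  - exists (Nat.max Nt Ns). intros x Hx; apply Hu; lra.
  - exfalso. assert (u = s + d / 2) by (unfold u, Rmin in *; destruct Rle_dec; lra).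
    assert (S u) by (split; [unfold u in *; lra|eauto]).
    pose proof (Hs1 u ltac:(assumption)). lra.
Qed.

Lemma open_intervals_nbhd (xl xr : nat -> R) x N : exists d, 0 < d /\
  forall n, (n <= N)%nat -> xl n < x < xr n ->
  forall x', Rabs (x' - x) < d -> xl n < x' < xr n.
Proof.
  induction N as [|N [d [Hd HN]]].
  - destruct (classic (xl 0%nat < x < xr 0%nat)) as [H|H].
    + exists (Rmin (x - xl 0%nat) (xr 0%nat - x)). split; [apply Rmin_glb_lt; lra|].
      intros n Hn Hx x' Hx'. replace n with 0%nat in * by lia.
      pose proof (Rmin_l (x - xl 0%nat) (xr 0%nat - x)).
      pose proof (Rmin_r (x - xl 0%nat) (xr 0%nat - x)).
      apply Rabs_def2 in Hx'. lra.
    + exists 1. split; [lra|]. intros n Hn Hx. replace n with 0%nat in * by lia. tauto.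
  - destruct (classic (xl (S N) < x < xr (S N))) as [H|H].
    + set (e := Rmin (x - xl (S N)) (xr (S N) - x)).
      exists (Rmin d e). split; [repeat apply Rmin_glb_lt; unfold e; lra|].
      pose proof (Rmin_l d e). pose proof (Rmin_r d e).
      pose proof (Rmin_l (x - xl (S N)) (xr (S N) - x)).
      pose proof (Rmin_r (x - xl (S N)) (xr (S N) - x)).
      intros n Hn Hx x' Hx'. destruct (Nat.eq_dec n (S N)) as [->|].
      * apply Rabs_def2 in Hx'. unfold e in *. lra.
      * apply HN; auto; [lia|]. eapply Rlt_le_trans; [exact Hx'|assumption].
    + exists d. split; auto. intros n Hn Hx.
      destruct (Nat.eq_dec n (S N)) as [->|]; [tauto|apply HN; auto; lia].
Qed.

Definition in_interior (r : rect) (x y : R) : Prop :=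
  rx1 r < x < rx2 r /\ ry1 r < y < ry2 r.

Definition height (r : rect) : R := ry2 r - ry1 r.

Lemma finite_subcover (c : nat -> rect) a b cc dd : a <= b -> cc <= dd ->
  (forall x y, a <= x <= b -> cc <= y <= dd -> exists n, in_interior (c n) x y) ->
  exists N, forall x y, a <= x <= b -> cc <= y <= dd ->
    exists n, (n <= N)%nat /\ in_interior (c n) x y.
Proof.
  intros Hab Hcd Hcov.
  set (covers_column N x := forall y, cc <= y <= dd ->
                              exists n, (n <= N)%nat /\ in_interior (c n) x y).
  assert (Hcol : forall x, a <= x <= b -> exists N, covers_column N x).
  { intros x Hx.
    apply (uniform_on_segment cc dd (fun N y => exists n, (n <= N)%nat /\ in_interior (c n) x y)); auto.
    - intros N N' y HN [n [Hn H]]. exists n; split; [lia|auto].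
    - intros y Hy. destruct (Hcov x y Hx Hy) as [n [Hx1 Hy1]].
      exists n, (Rmin (y - ry1 (c n)) (ry2 (c n) - y)).
      split; [apply Rmin_glb_lt; lra|].
      intros y' Hy'. exists n. split; auto. apply Rabs_def2 in Hy'.
      pose proof (Rmin_l (y - ry1 (c n)) (ry2 (c n) - y)).
      pose proof (Rmin_r (y - ry1 (c n)) (ry2 (c n) - y)).
      split; [auto|lra]. }
  destruct (uniform_on_segment a b covers_column) as [N HN]; auto.
  3:{ exists N. intros x y Hx Hy. exact (HN x Hx y Hy). }
  - intros N N' x HN H y Hy. destruct (H y Hy) as [n [Hn H']]. exists n; split; [lia|auto].
  - intros x Hx. destruct (Hcol x Hx) as [N HN].
    destruct (open_intervals_nbhd (fun n => rx1 (c n)) (fun n => rx2 (c n)) x N) as [d [Hd Hnb]].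
    exists N, d. split; auto. intros x' Hx' y Hy.
    destruct (HN y Hy) as [n [Hn [H1 H2]]].
    exists n. split; [exact Hn|]. split; [apply (Hnb n Hn H1 x' Hx')|exact H2].
Qed.

(* Fubini for step functions: apply [weighted_cover_length] first in y, then in x. *)
Lemma rect_area_le_finite_cover (c : nat -> rect) a b cc dd N :
  (forall n, proper_rect (c n)) -> a <= b -> cc <= dd ->
  (forall x y, a <= x <= b -> cc <= y <= dd -> exists n, (n <= N)%nat /\ in_interior (c n) x y) ->
  (b - a) * (dd - cc) <=
  sum_f_R0 (fun n => height (c n) * overlap (rx1 (c n)) (rx2 (c n)) a b) N.
Proof.
  intros Hp Hab Hcd Hcov. rewrite Rmult_comm.
  apply weighted_cover_length; auto.
  - intros n. destruct (Hp n). unfold height. lra.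
  - intros x Hx.
    set (hit n := indicator (rx1 (c n)) (rx2 (c n)) x 1).
    assert (Hhit : forall n, 0 <= hit n) by (intros; apply indicator_ge0; lra).
    assert (Hy := weighted_cover_length N (fun n => ry1 (c n)) (fun n => ry2 (c n)) hit 1 cc dd Hcd Hhit).
    rewrite Rmult_1_l in Hy. eapply Rle_trans; [apply Hy|].
    + intros y Hy'. destruct (Hcov x y Hx Hy') as [n [Hn [H1 H2]]].
      eapply Rle_trans; [|apply (sum_f_R0_ge_term _ N n); [|exact Hn]].
      * unfold hit, indicator; repeat destruct Rle_dec; lra.
      * intros k _. unfold hit. apply indicator_ge0, indicator_ge0. lra.
    + apply sum_Rle. intros n _. destruct (Hp n).
      pose proof (overlap_le_length (ry1 (c n)) (ry2 (c n)) cc dd ltac:(lra)).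
      pose proof (overlap_ge0 (ry1 (c n)) (ry2 (c n)) cc dd).
      unfold hit, height, indicator; repeat destruct Rle_dec; nra.
Qed.

Definition lsum (f : rect -> R) (l : list rect) : R := fold_right (fun r acc => f r + acc) 0 l.

Definition list_area (l : list rect) : R := lsum area l.

Definition covers (l : list rect) (A : R -> R -> Prop) : Prop :=
  forall x y, A x y -> exists r, In r l /\ in_rect r x y.

Definition inside (l : list rect) (A : R -> R -> Prop) : Prop :=
  forall r x y, In r l -> in_rect r x y -> A x y.

Fixpoint chained (x : R) (l : list rect) (z : R) : Prop :=
  match l with
  | nil => x <= z
  | r :: l' => x <= rx1 r /\ proper_rect r /\ chained (rx2 r) l' z
  end.

Lemma lsum_app f l1 l2 : lsum f (l1 ++ l2) = lsum f l1 + lsum f l2.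
Proof. induction l1 as [|r l1 IH]; simpl; [|rewrite IH]; lra. Qed.

Lemma lsum_le f g l : (forall r, In r l -> f r <= g r) -> lsum f l <= lsum g l.
Proof.
  induction l as [|r l IH]; simpl; intros H; [lra|].
  pose proof (H r (or_introl eq_refl)); pose proof (IH (fun r' Hr => H r' (or_intror Hr))); lra.
Qed.

Lemma lsum_scal c f l : lsum (fun r => c * f r) l = c * lsum f l.
Proof. induction l as [|r l IH]; simpl; [|rewrite IH]; ring. Qed.

Lemma lsum_sum_f_R0 (g : rect -> nat -> R) l N :
  lsum (fun r => sum_f_R0 (g r) N) l = sum_f_R0 (fun n => lsum (fun r => g r n) l) N.
Proof.
  induction l as [|r l IH]; simpl.
  - induction N as [|N IHN]; simpl; lra.
  - rewrite IH, <- sum_plus. reflexivity.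
Qed.

Lemma chained_le x l z : chained x l z -> x <= z.
Proof.
  revert x; induction l as [|r l IH]; simpl; intros x H; [lra|].
  destruct H as [H1 [[H2 _] H3]]. pose proof (IH _ H3). lra.
Qed.

Lemma chained_proper x l z r : chained x l z -> In r l -> proper_rect r.
Proof.
  revert x; induction l as [|r0 l IH]; simpl; intros x H Hr; [destruct Hr|].
  destruct H as [_ [H1 H2]]. destruct Hr as [<-|Hr]; eauto.
Qed.

Lemma chained_app x l1 y l2 z : chained x l1 y -> chained y l2 z -> chained x (l1 ++ l2) z.
Proof.
  revert x; induction l1 as [|r l1 IH]; simpl; intros x H1 H2.
  - destruct l2 as [|r l2]; simpl in *; [lra|]. split; [lra|tauto].
  - destruct H1 as [? [? ?]]. auto.
Qed.

Lemma chained_overlap u v x l z : chained x l z ->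
  lsum (fun r => overlap u v (rx1 r) (rx2 r)) l <= overlap u v x z.
Proof.
  revert x; induction l as [|r l IH]; simpl; intros x H; [apply overlap_ge0|].
  destruct H as [H1 [[H2 _] H3]].
  pose proof (IH _ H3). pose proof (chained_le _ _ _ H3).
  pose proof (overlap_split u v (rx1 r) (rx2 r) z ltac:(lra)).
  pose proof (overlap_shrink_left u v x (rx1 r) z H1). lra.
Qed.

(** * Lower bounds for the outer measure *)

Definition enlarge (r : rect) (d : R) : rect :=
  mkRect (rx1 r - d) (rx2 r + d) (ry1 r - d) (ry2 r + d).

(* With [d <= 1], enlarging by [d] adds at most [d * (2 * (w + h) + 4)] to the area. *)
Definition margin (r : rect) (e : R) : R :=
  e / (2 * ((rx2 r - rx1 r) + (ry2 r - ry1 r)) + 4 + e).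

Lemma margin_pos r e : proper_rect r -> 0 < e -> 0 < margin r e.
Proof. intros [] He. unfold margin. apply Rdiv_lt_0_compat; lra. Qed.

Lemma enlarge_margin_area r e :
  proper_rect r -> 0 < e -> area (enlarge r (margin r e)) <= area r + e.
Proof.
  intros [Hx Hy] He. unfold area, enlarge, margin; simpl.
  set (D := 2 * ((rx2 r - rx1 r) + (ry2 r - ry1 r)) + 4).
  set (d := e / (D + e)).
  assert (Hd : d * (D + e) = e) by (unfold d; field; unfold D; lra).
  assert (0 < d) by (unfold d; apply Rdiv_lt_0_compat; unfold D; lra).
  assert (d * D <= e) by nra. assert (d <= 1) by (unfold D in *; nra).
  unfold D in *. nra.
Qed.

Lemma geometric_half_sum eps N :
  sum_f_R0 (fun n => eps * (/ 2) ^ S n) N = eps * (1 - (/ 2) ^ S N).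
Proof.
  induction N as [|N IH]; [simpl; field|].
  change (sum_f_R0 (fun n => eps * (/ 2) ^ S n) N + eps * (/ 2) ^ S (S N)
          = eps * (1 - (/ 2) ^ S (S N))).
  rewrite IH. simpl. field.
Qed.

Lemma area_sum_eq c N : area_sum c N = sum_f_R0 (fun n => area (c n)) N.
Proof. induction N as [|N IH]; simpl; [|rewrite IH]; reflexivity. Qed.

Lemma finite_subcover_list (c : nat -> rect) (l : list rect) :
  (forall r, In r l -> proper_rect r /\
     forall x y, in_rect r x y -> exists n, in_interior (c n) x y) ->
  exists N, forall r, In r l -> forall x y, in_rect r x y ->
    exists n, (n <= N)%nat /\ in_interior (c n) x y.
Proof.
  induction l as [|r l IH]; intros Hl; [exists 0%nat; intros ? []|].
  destruct (IH (fun r' Hr => Hl r' (or_intror Hr))) as [N1 HN1].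
  destruct (Hl r (or_introl eq_refl)) as [[Hx Hy] Hr].
  destruct (finite_subcover c (rx1 r) (rx2 r) (ry1 r) (ry2 r)) as [N2 HN2]; auto.
  { intros x y Hx' Hy'. apply Hr. split; auto. }
  exists (Nat.max N1 N2). intros r' [<-|Hr'] x y Hxy.
  - destruct Hxy. destruct (HN2 x y) as [n [Hn Hi]]; auto. exists n; split; [lia|auto].
  - destruct (HN1 r' Hr' x y Hxy) as [n [Hn Hi]]. exists n; split; [lia|auto].
Qed.

(* Cover [A] by the slightly enlarged rectangles, whose interiors still cover and whose
   total area exceeds [s] by at most [eps]; compactness and Fubini do the rest. *)
Lemma staircase_le_cover A x l z s :
  chained x l z -> inside l A -> cover_le A s -> list_area l <= s.
Proof.
  intros Hch Hin [c [Hp [Hc Hs]]].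
  apply le_epsilon. intros eps Heps.
  set (e n := eps * (/ 2) ^ S n).
  assert (He : forall n, 0 < e n) by (intros; unfold e; apply Rmult_lt_0_compat; [lra|apply pow_lt; lra]).
  set (c' n := enlarge (c n) (margin (c n) (e n))).
  assert (Hd : forall n, 0 < margin (c n) (e n)) by (intros; apply margin_pos; auto).
  assert (Hp' : forall n, proper_rect (c' n))
    by (intros n; destruct (Hp n); pose proof (Hd n); unfold c', enlarge, proper_rect; simpl; lra).
  assert (Hc' : forall x y, A x y -> exists n, in_interior (c' n) x y).
  { intros x' y' Hxy. destruct (Hc x' y' Hxy) as [n Hn]. exists n. pose proof (Hd n).
    unfold c', enlarge, in_interior, in_rect in *; simpl. lra. }
  destruct (finite_subcover_list c' l) as [N HN].
  { intros r Hr. split; [exact (chained_proper _ _ _ _ Hch Hr)|].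
    intros x' y' Hxy. apply Hc'. apply (Hin r); auto. }
  assert (Hcol : forall r, In r l -> area r <=
            sum_f_R0 (fun n => height (c' n) * overlap (rx1 (c' n)) (rx2 (c' n)) (rx1 r) (rx2 r)) N).
  { intros r Hr. destruct (chained_proper _ _ _ _ Hch Hr).
    apply rect_area_le_finite_cover; auto.
    intros x' y' Hx' Hy'. apply (HN r Hr). split; auto. }
  unfold list_area. eapply Rle_trans; [apply lsum_le, Hcol|].
  rewrite lsum_sum_f_R0.
  apply Rle_trans with (sum_f_R0 (fun n => area (c n) + e n) N).
  - apply sum_Rle. intros n _. rewrite lsum_scal.
    pose proof (chained_overlap (rx1 (c' n)) (rx2 (c' n)) x l z Hch).
    pose proof (overlap_le_length (rx1 (c' n)) (rx2 (c' n)) x z ltac:(apply Hp')).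
    pose proof (enlarge_margin_area (c n) (e n) (Hp n) (He n)) as Harea.
    assert (0 <= height (c' n)) by (destruct (Hp' n); unfold height; lra).
    apply Rle_trans with (height (c' n) * (rx2 (c' n) - rx1 (c' n))); [apply Rmult_le_compat_l; lra|].
    unfold height; rewrite Rmult_comm; exact Harea.
  - rewrite sum_plus, <- area_sum_eq. pose proof (Hs N).
    pose proof (geometric_half_sum eps N). pose proof (pow_lt (/ 2) (S N) ltac:(lra)).
    unfold e in *. nra.
Qed.

Lemma staircase_le_outer A x l z m :
  chained x l z -> inside l A -> lebesgue_outer A m -> list_area l <= m.
Proof. intros Hch Hin [_ Hm]. apply Hm. intros s Hs. exact (staircase_le_cover A x l z s Hch Hin Hs). Qed.

(** * Upper bounds for the outer measure *)

Definition point_rect : rect := mkRect 0 0 0 0.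

Lemma area_ge0 r : proper_rect r -> 0 <= area r.
Proof. unfold proper_rect, area; intros; nra. Qed.

Lemma list_area_ge0 l : (forall r, In r l -> proper_rect r) -> 0 <= list_area l.
Proof.
  induction l as [|r l IH]; simpl; intros H; [lra|].
  pose proof (area_ge0 r (H r (or_introl eq_refl))).
  pose proof (IH (fun r' Hr => H r' (or_intror Hr))).
  change (list_area (r :: l)) with (area r + list_area l). lra.
Qed.

Lemma sum_nth_area_le l N : (forall r, In r l -> proper_rect r) ->
  sum_f_R0 (fun n => area (nth n l point_rect)) N <= list_area l.
Proof.
  revert N; induction l as [|r l IH]; intros N H.
  - simpl. rewrite (sum_eq _ (fun _ => 0)).
    + clear. induction N as [|N IH]; simpl; lra.
    + intros [|i] _; unfold point_rect, area; simpl; ring.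
  - pose proof (area_ge0 r (H r (or_introl eq_refl))).
    change (list_area (r :: l)) with (area r + list_area l).
    destruct N as [|N].
    + simpl. pose proof (list_area_ge0 l (fun r' Hr => H r' (or_intror Hr))). lra.
    + rewrite decomp_sum by lia. simpl. pose proof (IH N (fun r' Hr => H r' (or_intror Hr))). lra.
Qed.

Lemma cover_le_list A l :
  (forall r, In r l -> proper_rect r) -> covers l A -> cover_le A (list_area l).
Proof.
  intros Hp Hc. exists (fun n => nth n l point_rect). split; [|split].
  - intros n. destruct (nth_in_or_default n l point_rect) as [H| ->]; auto.
    unfold point_rect, proper_rect; simpl; lra.
  - intros x y Hxy. destruct (Hc x y Hxy) as [r [Hr Hin]].
    destruct (In_nth l r point_rect Hr) as [n [_ Hn]]. exists n. rewrite Hn; auto.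
  - intros N. rewrite area_sum_eq. apply sum_nth_area_le; auto.
Qed.

Lemma outer_le_list_area A l m : (forall r, In r l -> proper_rect r) -> covers l A ->
  lebesgue_outer A m -> m <= list_area l.
Proof. intros Hp Hc [Hm _]. apply Hm, cover_le_list; auto. Qed.

Lemma cover_le_ge0 A s : cover_le A s -> 0 <= s.
Proof.
  intros [c [Hp [_ Hs]]]. pose proof (Hs 0%nat). simpl in *.
  pose proof (area_ge0 _ (Hp 0%nat)). lra.
Qed.

Lemma lebesgue_outer_exists A : (exists s, cover_le A s) -> exists m, lebesgue_outer A m.
Proof.
  intros [s0 Hs0]. set (E t := exists s, cover_le A s /\ t = - s).
  destruct (completeness E) as [l [Hl1 Hl2]].
  - exists 0. intros t [s [Hs ->]]. pose proof (cover_le_ge0 A s Hs). lra.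
  - exists (- s0), s0; auto.
  - exists (- l). split.
    + intros s Hs. pose proof (Hl1 (- s) (ex_intro _ s (conj Hs eq_refl))). lra.
    + intros m' Hm'. assert (l <= - m'); [|lra].
      apply Hl2. intros t [s [Hs ->]]. pose proof (Hm' s Hs). lra.
Qed.

Lemma Prob_exists E : exists p, Prob E p.
Proof.
  destruct (lebesgue_outer_exists (fun x y => E x y /\ Theta x y)) as [m Hm].
  - exists (list_area (mkRect (-1) 1 (-1) 1 :: nil)). apply cover_le_list.
    + intros r [<-|[]]. unfold proper_rect; simpl; lra.
    + intros x y [_ Ht]. exists (mkRect (-1) 1 (-1) 1). split; [left; auto|].
      unfold in_rect, Theta in *; simpl; lra.
  - exists (m / 3). unfold Prob. replace (3 * (m / 3)) with m by field. auto.
Qed.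

Lemma Prob_null E : (forall x y, Theta x y -> ~ E x y) -> Prob E 0.
Proof.
  intros H. unfold Prob. rewrite Rmult_0_r. split.
  - intros s Hs. exact (cover_le_ge0 _ s Hs).
  - intros m' Hm'. apply Hm'. change 0 with (list_area nil). apply cover_le_list.
    + intros r [].
    + intros x y [Hx Ht]. exfalso; exact (H x y Ht Hx).
Qed.

(** * Jordan content *)

Definition jordan_outer_le (A : R -> R -> Prop) (s : R) : Prop :=
  forall eps, 0 < eps -> exists l,
    (forall r, In r l -> proper_rect r) /\ covers l A /\ list_area l <= s + eps.

(* Staircases live over [x, z], so that inner bounds of side-by-side regions add up
   ([jordan_inner_ge_adjacent]). *)
Definition jordan_inner_ge (A : R -> R -> Prop) (x z s : R) : Prop :=
  forall eps, 0 < eps -> exists l, chained x l z /\ inside l A /\ s - eps <= list_area l.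

Definition box (x0 x1 y0 y1 x y : R) : Prop := x0 <= x <= x1 /\ y0 <= y <= y1.

Definition under_graph (g : R -> R) (x0 x1 c x y : R) : Prop := x0 <= x <= x1 /\ c <= y <= g x.

Lemma jordan_outer_le_outer A s m : jordan_outer_le A s -> lebesgue_outer A m -> m <= s.
Proof.
  intros HA Hm. apply le_epsilon. intros eps Heps.
  destruct (HA eps Heps) as [l [Hp [Hc Hl]]]. pose proof (outer_le_list_area A l m Hp Hc Hm). lra.
Qed.

Lemma jordan_inner_ge_outer A x z s m : jordan_inner_ge A x z s -> lebesgue_outer A m -> s <= m.
Proof.
  intros HA Hm. apply le_epsilon. intros eps Heps.
  destruct (HA eps Heps) as [l [Hch [Hin Hl]]]. pose proof (staircase_le_outer A x l z m Hch Hin Hm). lra.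
Qed.

Lemma jordan_outer_le_sub (A B : R -> R -> Prop) s :
  (forall x y, A x y -> B x y) -> jordan_outer_le B s -> jordan_outer_le A s.
Proof.
  intros HAB HB eps Heps. destruct (HB eps Heps) as [l [Hp [Hc Hl]]].
  exists l. split; [exact Hp|split; [|exact Hl]].
  intros x y Hxy. apply Hc, HAB, Hxy.
Qed.

Lemma jordan_outer_le_weaken A s t : s <= t -> jordan_outer_le A s -> jordan_outer_le A t.
Proof.
  intros Hst HA eps Heps. destruct (HA eps Heps) as [l [Hp [Hc Hl]]].
  exists l. split; [exact Hp|split; [exact Hc|lra]].
Qed.

Lemma jordan_outer_le_union (A B : R -> R -> Prop) s t :
  jordan_outer_le A s -> jordan_outer_le B t -> jordan_outer_le (fun x y => A x y \/ B x y) (s + t).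
Proof.
  intros HA HB eps Heps.
  destruct (HA (eps / 2) ltac:(lra)) as [l1 [Hp1 [Hc1 Hl1]]].
  destruct (HB (eps / 2) ltac:(lra)) as [l2 [Hp2 [Hc2 Hl2]]].
  exists (l1 ++ l2). split; [|split].
  - intros r Hr. apply in_app_or in Hr. destruct Hr; auto.
  - intros x y [H|H]; [destruct (Hc1 x y H) as [r [? ?]]|destruct (Hc2 x y H) as [r [? ?]]];
      exists r; split; auto; apply in_or_app; auto.
  - unfold list_area in *. rewrite lsum_app. lra.
Qed.

Lemma jordan_outer_le_box x0 x1 y0 y1 :
  x0 <= x1 -> y0 <= y1 -> jordan_outer_le (box x0 x1 y0 y1) ((x1 - x0) * (y1 - y0)).
Proof.
  intros Hx Hy eps Heps. exists (mkRect x0 x1 y0 y1 :: nil). split; [|split].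
  - intros r [<-|[]]. split; simpl; lra.
  - intros x y Hxy. exists (mkRect x0 x1 y0 y1). split; [left; auto|exact Hxy].
  - unfold list_area, area; simpl. lra.
Qed.

Lemma jordan_inner_ge_sup (A B : R -> R -> Prop) x z s :
  (forall x y, A x y -> B x y) -> jordan_inner_ge A x z s -> jordan_inner_ge B x z s.
Proof.
  intros HAB HA eps Heps. destruct (HA eps Heps) as [l [Hch [Hin Hl]]].
  exists l. split; [exact Hch|split; [|exact Hl]].
  intros r x' y' Hr Hxy. apply HAB, (Hin r); auto.
Qed.

Lemma jordan_inner_ge_weaken A x z s t : t <= s -> jordan_inner_ge A x z s -> jordan_inner_ge A x z t.
Proof.
  intros Hts HA eps Heps. destruct (HA eps Heps) as [l [Hch [Hin Hl]]].
  exists l. split; [exact Hch|split; [exact Hin|lra]].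
Qed.

Lemma jordan_inner_ge_adjacent (A B : R -> R -> Prop) x y z s t :
  jordan_inner_ge A x y s -> jordan_inner_ge B y z t ->
  jordan_inner_ge (fun x y => A x y \/ B x y) x z (s + t).
Proof.
  intros HA HB eps Heps.
  destruct (HA (eps / 2) ltac:(lra)) as [l1 [Hch1 [Hin1 Hl1]]].
  destruct (HB (eps / 2) ltac:(lra)) as [l2 [Hch2 [Hin2 Hl2]]].
  exists (l1 ++ l2). split; [|split].
  - exact (chained_app _ _ _ _ _ Hch1 Hch2).
  - intros r x' y' Hr Hxy. apply in_app_or in Hr. destruct Hr; [left; eapply Hin1|right; eapply Hin2]; eauto.
  - unfold list_area in *. rewrite lsum_app. lra.
Qed.

Lemma jordan_inner_ge_box x0 x1 y0 y1 :
  x0 <= x1 -> y0 <= y1 -> jordan_inner_ge (box x0 x1 y0 y1) x0 x1 ((x1 - x0) * (y1 - y0)).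
Proof.
  intros Hx Hy eps Heps. exists (mkRect x0 x1 y0 y1 :: nil). split; [|split].
  - simpl. unfold proper_rect; simpl. lra.
  - intros r x y [<-|[]] Hxy. exact Hxy.
  - unfold list_area, area; simpl. lra.
Qed.

(** * Regions under affine graphs *)

Lemma exists_nat_gt r : exists n, r < INR n.
Proof.
  destruct (Rle_dec r 0) as [|Hr]; [exists 1%nat; simpl; lra|].
  destruct (archimed_cor1 (/ r)) as [N [HN HN0]]; [apply Rinv_0_lt_compat; lra|].
  exists N. apply Rnot_le_lt; intro. assert (0 < INR N) by (apply lt_0_INR; auto).
  pose proof (Rinv_le_contravar (INR N) r ltac:(assumption) ltac:(assumption)). lra.
Qed.

Lemma exists_nat_div_le E eps : 0 <= E -> 0 < eps -> exists K, (1 <= K)%nat /\ E / INR K <= eps.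
Proof.
  intros HE Heps. destruct (exists_nat_gt (E / eps)) as [n Hn]. exists (S n). split; [lia|].
  assert (0 < INR (S n)) by (apply lt_0_INR; lia). rewrite S_INR in *.
  apply Rmult_le_reg_r with (INR n + 1); [lra|]. unfold Rdiv. rewrite Rmult_assoc, Rinv_l by lra.
  assert (E / eps * eps = E) by (field; lra). unfold Rdiv in *. nra.
Qed.

Definition grid (x0 x1 : R) (K k : nat) : R := x0 + INR k * ((x1 - x0) / INR K).

Lemma grid_first x0 x1 K : grid x0 x1 K 0 = x0.
Proof. unfold grid; simpl; ring. Qed.

Lemma grid_last x0 x1 K : (1 <= K)%nat -> grid x0 x1 K K = x1.
Proof. intros HK. unfold grid. field. apply not_0_INR. lia. Qed.

Lemma grid_step_le x0 x1 K k : x0 <= x1 -> (1 <= K)%nat -> grid x0 x1 K k <= grid x0 x1 K (S k).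
Proof.
  intros Hx HK. unfold grid. rewrite S_INR.
  assert (0 <= (x1 - x0) / INR K) by (apply Rle_mult_inv_pos; [lra|apply lt_0_INR; lia]). lra.
Qed.

Lemma grid_in x0 x1 K k : x0 <= x1 -> (1 <= K)%nat -> (k <= K)%nat ->
  x0 <= grid x0 x1 K k <= x1.
Proof.
  intros Hx HK Hk. unfold grid. assert (0 < INR K) by (apply lt_0_INR; lia).
  pose proof (le_INR _ _ Hk). pose proof (pos_INR k).
  assert (INR k * ((x1 - x0) / INR K) = (x1 - x0) * (INR k / INR K)) as -> by (field; lra).
  assert (INR k / INR K <= 1) by (apply Rmult_le_reg_r with (INR K); [lra|];
                                  unfold Rdiv; rewrite Rmult_assoc, Rinv_l; lra).
  assert (0 <= INR k / INR K) by (apply Rle_mult_inv_pos; lra). nra.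
Qed.

Lemma grid_cell x0 x1 K x : (1 <= K)%nat -> x0 <= x <= x1 ->
  exists k, (k < K)%nat /\ grid x0 x1 K k <= x <= grid x0 x1 K (S k).
Proof.
  intros HK Hxx.
  assert (Hj : forall j, x <= grid x0 x1 K (S j) -> exists k, (k <= j)%nat /\
                 grid x0 x1 K k <= x <= grid x0 x1 K (S k)).
  { induction j as [|j IH]; intros Hxj.
    - exists 0%nat. rewrite grid_first. split; [lia|lra].
    - destruct (Rle_dec x (grid x0 x1 K (S j))) as [Hle|Hgt].
      + destruct (IH Hle) as [k [Hk Hk']]. exists k; split; [lia|auto].
      + exists (S j). split; [lia|lra]. }
  destruct (Hj (pred K)) as [k [Hk Hk']]; [|exists k; split; [lia|auto]].
  replace (S (pred K)) with K by lia. rewrite grid_last by exact HK. lra.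
Qed.

Lemma list_area_map_seq_affine (f : nat -> rect) p q n :
  (forall k, area (f k) = p + q * INR k) ->
  list_area (map f (seq 0 n)) = p * INR n + q * (INR n * (INR n - 1) / 2).
Proof.
  intros Hf. induction n as [|n IH]; [simpl; unfold list_area; simpl; field|].
  rewrite seq_S, map_app. unfold list_area in *. rewrite lsum_app, IH. simpl.
  rewrite Hf, ?S_INR. destruct n; simpl; field.
Qed.

Section AffineColumns.

Variables (a b x0 x1 c : R) (K : nat).
Hypothesis Hx : x0 <= x1.
Hypothesis HK : (1 <= K)%nat.
Hypothesis Hc : forall x, x0 <= x <= x1 -> c <= a + b * x.

Let g x := a + b * x.
Let xk k := grid x0 x1 K k.

Definition affine_column (top : R -> R -> R) (k : nat) : rect :=
  mkRect (xk k) (xk (S k)) c (top (g (xk k)) (g (xk (S k)))).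

Definition affine_columns (top : R -> R -> R) : list rect := map (affine_column top) (seq 0 K).

Lemma affine_columns_chained top :
  (forall u v, Rmin u v <= top u v) -> chained x0 (affine_columns top) x1.
Proof.
  intros Htop. unfold affine_columns.
  assert (Hcol : forall n j, (j + n <= K)%nat ->
            chained (xk j) (map (affine_column top) (seq j n)) (xk (j + n))).
  { induction n as [|n IH]; intros j Hjn; simpl.
    - rewrite Nat.add_0_r. lra.
    - pose proof (Hc _ (grid_in x0 x1 K j Hx HK ltac:(lia))).
      pose proof (Hc _ (grid_in x0 x1 K (S j) Hx HK ltac:(lia))).
      pose proof (Htop (g (xk j)) (g (xk (S j)))).
      pose proof (grid_step_le x0 x1 K j Hx HK).
      split; [unfold xk; lra|split].
      + split; simpl; [unfold xk; lra|]. unfold g, xk in *. unfold Rmin in *; destruct Rle_dec; lra.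
      + replace (j + S n)%nat with (S j + n)%nat by lia. apply IH. lia. }
  pose proof (Hcol K 0%nat ltac:(lia)) as Hall. unfold xk in Hall.
  rewrite Nat.add_0_l, grid_first, grid_last in Hall by exact HK. exact Hall.
Qed.

(* The trapezoidal rule is exact for affine [g]; [top] shifts each column by [sigma] times
   half the oscillation [|b| h] of [g] on it. *)
Lemma affine_columns_area top sigma :
  (forall u v, top u v = (u + v) / 2 + sigma * (Rabs (v - u) / 2)) ->
  list_area (affine_columns top) =
  (x1 - x0) * ((g x0 + g x1) / 2 - c) + sigma * (Rabs b * ((x1 - x0) * (x1 - x0)) / (2 * INR K)).
Proof.
  intros Htop. assert (0 < INR K) by (apply lt_0_INR; lia).
  set (h := (x1 - x0) / INR K).
  assert (Hh : 0 <= h) by (apply Rle_mult_inv_pos; lra).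
  unfold affine_columns.
  rewrite (list_area_map_seq_affine _ (h * (g x0 + b * h / 2 + sigma * (Rabs b * h / 2) - c)) (b * h * h)).
  - unfold g, h. field. lra.
  - intros k. unfold affine_column, area; simpl. rewrite Htop.
    unfold xk, grid, g. fold h. rewrite S_INR.
    replace (a + b * (x0 + (INR k + 1) * h) - (a + b * (x0 + INR k * h))) with (b * h) by ring.
    rewrite Rabs_mult, (Rabs_pos_eq h Hh). field.
Qed.

Lemma affine_between x u v : u <= x <= v ->
  Rmin (g u) (g v) <= g x <= Rmax (g u) (g v).
Proof.
  intros Hxuv. unfold g, Rmin, Rmax.
  destruct (Rle_dec 0 b); repeat destruct Rle_dec; split; nra.
Qed.

End AffineColumns.

Lemma Rmax_mid u v : Rmax u v = (u + v) / 2 + 1 * (Rabs (v - u) / 2).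
Proof. unfold Rmax, Rabs; repeat destruct Rle_dec; repeat destruct Rcase_abs; lra. Qed.

Lemma Rmin_mid u v : Rmin u v = (u + v) / 2 + -1 * (Rabs (v - u) / 2).
Proof. unfold Rmin, Rabs; repeat destruct Rle_dec; repeat destruct Rcase_abs; lra. Qed.

Lemma jordan_outer_le_under_affine a b x0 x1 c : x0 <= x1 ->
  (forall x, x0 <= x <= x1 -> c <= a + b * x) ->
  jordan_outer_le (under_graph (fun x => a + b * x) x0 x1 c)
    ((x1 - x0) * ((a + b * x0 + (a + b * x1)) / 2 - c)).
Proof.
  intros Hx Hc eps Heps.
  destruct (exists_nat_div_le (Rabs b * ((x1 - x0) * (x1 - x0)) / 2) eps) as [K [HK HKe]];
    [apply Rle_mult_inv_pos; [apply Rmult_le_pos; [apply Rabs_pos|nra]|lra]|auto|].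
  exists (affine_columns a b x0 x1 c K Rmax). split; [|split].
  - intros r Hr. exact (chained_proper _ _ _ _ (affine_columns_chained a b x0 x1 c K Hx HK Hc Rmax
                           ltac:(intros; unfold Rmin, Rmax; destruct Rle_dec; lra)) Hr).
  - intros x y [Hxx Hy]. destruct (grid_cell x0 x1 K x HK Hxx) as [k [Hk Hk']].
    exists (affine_column a b x0 x1 c K Rmax k). split.
    + apply in_map, in_seq. lia.
    + pose proof (affine_between a b _ _ _ Hk'). unfold in_rect; simpl. lra.
  - rewrite (affine_columns_area a b x0 x1 c K Hx HK Rmax 1 Rmax_mid).
    replace (Rabs b * ((x1 - x0) * (x1 - x0)) / (2 * INR K))
      with (Rabs b * ((x1 - x0) * (x1 - x0)) / 2 / INR K) by (field; apply not_0_INR; lia).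
    lra.
Qed.

Lemma jordan_inner_ge_under_affine a b x0 x1 c : x0 <= x1 ->
  (forall x, x0 <= x <= x1 -> c <= a + b * x) ->
  jordan_inner_ge (under_graph (fun x => a + b * x) x0 x1 c) x0 x1
    ((x1 - x0) * ((a + b * x0 + (a + b * x1)) / 2 - c)).
Proof.
  intros Hx Hc eps Heps.
  destruct (exists_nat_div_le (Rabs b * ((x1 - x0) * (x1 - x0)) / 2) eps) as [K [HK HKe]];
    [apply Rle_mult_inv_pos; [apply Rmult_le_pos; [apply Rabs_pos|nra]|lra]|auto|].
  exists (affine_columns a b x0 x1 c K Rmin). split; [|split].
  - apply affine_columns_chained; auto. intros; lra.
  - intros r x y Hr Hxy. apply in_map_iff in Hr. destruct Hr as [k [<- Hk]]. apply in_seq in Hk.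
    unfold in_rect, affine_column in Hxy; simpl in Hxy.
    pose proof (affine_between a b _ _ _ (proj1 Hxy)).
    pose proof (grid_in x0 x1 K k Hx HK ltac:(lia)). pose proof (grid_in x0 x1 K (S k) Hx HK ltac:(lia)).
    split; lra.
  - rewrite (affine_columns_area a b x0 x1 c K Hx HK Rmin (-1) Rmin_mid).
    replace (Rabs b * ((x1 - x0) * (x1 - x0)) / (2 * INR K))
      with (Rabs b * ((x1 - x0) * (x1 - x0)) / 2 / INR K) by (field; apply not_0_INR; lia).
    lra.
Qed.

(** * Borel sets and measurable functions *)

Lemma borel_ext (A B : R -> Prop) : (forall x, A x <-> B x) -> borel_set A -> borel_set B.
Proof.
  intros H HA. replace B with A; auto.
  apply functional_extensionality; intro x. apply propositional_extensionality; auto.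
Qed.

Lemma borel_interval a b : borel_set (fun x => a < x < b).
Proof. intros F _ Hi. apply Hi. Qed.

Lemma borel_True : borel_set (fun _ => True).
Proof. intros F HF _. apply HF. Qed.

Lemma borel_compl A : borel_set A -> borel_set (fun x => ~ A x).
Proof. intros HA F HF Hi. apply HF, HA; auto. Qed.

Lemma borel_union (An : nat -> R -> Prop) :
  (forall n, borel_set (An n)) -> borel_set (fun x => exists n, An n x).
Proof. intros HAn F HF Hi. apply HF. intros n; apply HAn; auto. Qed.

Lemma borel_False : borel_set (fun _ => False).
Proof. apply (borel_ext (fun x => ~ True)); [tauto|apply borel_compl, borel_True]. Qed.

Lemma borel_and (A B : R -> Prop) : borel_set A -> borel_set B -> borel_set (fun x => A x /\ B x).
Proof.
  intros HA HB.
  set (C n x := match n with O => ~ A x | _ => ~ B x end).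
  apply (borel_ext (fun x => ~ exists n, C n x)).
  - intros x; split.
    + intros H. split; apply NNPP; intro; apply H; [exists 0%nat|exists 1%nat]; auto.
    + intros [H1 H2] [[|n] Hn]; auto.
  - apply borel_compl, borel_union. intros [|n]; apply borel_compl; auto.
Qed.

Lemma borel_lt c : borel_set (fun x => x < c).
Proof.
  apply (borel_ext (fun x => exists n, c - INR n - 1 < x < c)).
  - intros x; split; [intros [n Hn]; lra|].
    intros H. destruct (exists_nat_gt (c - x)) as [n Hn]. exists n; lra.
  - apply (borel_union (fun n x => c - INR n - 1 < x < c)). intros; apply borel_interval.
Qed.

Lemma borel_gt c : borel_set (fun x => c < x).
Proof.
  apply (borel_ext (fun x => exists n, c < x < c + INR n + 1)).
  - intros x; split; [intros [n Hn]; lra|].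
    intros H. destruct (exists_nat_gt (x - c)) as [n Hn]. exists n; lra.
  - apply (borel_union (fun n x => c < x < c + INR n + 1)). intros; apply borel_interval.
Qed.

(* The sets whose preimage is Borel form a sigma-algebra, so open intervals suffice. *)
Lemma borel_measurable_intervals (f : R -> R) :
  (forall a b, borel_set (fun x => a < f x < b)) -> borel_measurable f.
Proof.
  intros H B HB. apply (HB (fun B' => borel_set (fun x => B' (f x)))); auto.
  split; [|split].
  - apply borel_True.
  - intros A HA. apply borel_compl; auto.
  - intros An HAn. apply (borel_union (fun n x => An n (f x))); auto.
Qed.

Lemma borel_measurable_ext f g : (forall t, f t = g t) -> borel_measurable f -> borel_measurable g.
Proof. intros H Hf. replace g with f; auto. apply functional_extensionality; auto. Qed.

Lemma borel_measurable_comp f g :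
  borel_measurable f -> borel_measurable g -> borel_measurable (fun t => g (f t)).
Proof. intros Hf Hg B HB. apply (Hf (fun x => B (g x))), Hg, HB. Qed.

Lemma borel_measurable_const c : borel_measurable (fun _ => c).
Proof.
  apply borel_measurable_intervals. intros a b. destruct (classic (a < c < b)).
  - apply (borel_ext (fun _ => True)); [tauto|apply borel_True].
  - apply (borel_ext (fun _ => False)); [tauto|apply borel_False].
Qed.

Lemma borel_measurable_opp : borel_measurable (fun t => - t).
Proof.
  apply borel_measurable_intervals. intros a b.
  apply (borel_ext (fun x => - b < x < - a)); [intros; lra|apply borel_interval].
Qed.

Lemma borel_measurable_scal_pos k : 0 < k -> borel_measurable (fun t => k * t).
Proof.
  intros Hk. apply borel_measurable_intervals. intros a b.
  apply (borel_ext (fun x => a / k < x < b / k)); [|apply borel_interval].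
    intros x. assert (a / k < x <-> a < k * x) by
      (split; intros; [apply (Rmult_lt_reg_r (/ k))|apply (Rmult_lt_reg_l k)];
       try apply Rinv_0_lt_compat; try lra; field_simplify; lra).
    assert (x < b / k <-> k * x < b) by
      (split; intros; [apply (Rmult_lt_reg_r (/ k))|apply (Rmult_lt_reg_l k)];
       try apply Rinv_0_lt_compat; try lra; field_simplify; lra).
    tauto.
Qed.

Lemma borel_measurable_scal k : borel_measurable (fun t => k * t).
Proof.
  destruct (Rtotal_order k 0) as [Hk|[->|Hk]].
  - apply (borel_measurable_ext (fun t => - (- k * t))); [intros; ring|].
    apply (borel_measurable_comp (fun t => - k * t) (fun t => - t)).
    + apply borel_measurable_scal_pos. lra.
    + apply borel_measurable_opp.
  - apply (borel_measurable_ext (fun _ => 0)); [intros; ring|apply borel_measurable_const].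
  - apply borel_measurable_scal_pos, Hk.
Qed.

Lemma borel_measurable_clamp : borel_measurable clamp.
Proof.
  apply borel_measurable_intervals. intros a b. apply borel_and.
  - destruct (Rlt_dec a 0); [|destruct (Rlt_dec a 1)].
    + apply (borel_ext (fun _ => True)); [|apply borel_True]. intros x; unfold clamp; split; [minmax|tauto].
    + apply (borel_ext (fun x => a < x)); [|apply borel_gt]. intros x; unfold clamp; split; minmax.
    + apply (borel_ext (fun _ => False)); [|apply borel_False]. intros x; unfold clamp; split; minmax.
  - destruct (Rlt_dec 1 b); [|destruct (Rlt_dec 0 b)].
    + apply (borel_ext (fun _ => True)); [|apply borel_True]. intros x; unfold clamp; split; [minmax|tauto].
    + apply (borel_ext (fun x => x < b)); [|apply borel_lt]. intros x; unfold clamp; split; minmax.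
    + apply (borel_ext (fun _ => False)); [|apply borel_False]. intros x; unfold clamp; split; minmax.
Qed.

Lemma Prob_le_jordan E p s :
  Prob E p -> jordan_outer_le (fun x y => E x y /\ Theta x y) s -> 3 * p <= s.
Proof. intros Hp Hs. exact (jordan_outer_le_outer _ _ _ Hs Hp). Qed.

Lemma Prob_ge_jordan E p x z s :
  Prob E p -> jordan_inner_ge (fun x y => E x y /\ Theta x y) x z s -> s <= 3 * p.
Proof. intros Hp Hs. exact (jordan_inner_ge_outer _ _ _ _ _ Hs Hp). Qed.

Lemma clamp_in01 t : in01 (clamp t).
Proof. unfold in01, clamp; minmax. Qed.

Lemma clamp_id t : in01 t -> clamp t = t.
Proof. unfold in01, clamp; minmax. Qed.

Lemma K_linear y : K y -> exists a, -1 <= a /\ y = (fst y, fun t => a * t).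
Proof.
  intros [a [Ha Hf]]. exists a. split; auto.
  destruct y as [y1 f]. f_equal. apply functional_extensionality, Hf.
Qed.

Lemma is_glb_min (S : R -> Prop) m : S m -> (forall x, S x -> m <= x) -> is_glb S m.
Proof. intros Hm Hlow. split; [exact Hlow|]. intros m' Hm'. apply Hm', Hm. Qed.

Lemma jordan_outer_le_below_zero z : 0 <= z ->
  jordan_outer_le (fun x y => (x <= z /\ y <= 0) /\ Theta x y) z.
Proof.
  intros Hz. apply (jordan_outer_le_weaken _ ((z - 0) * (0 - -1) + (1 - -1) * (0 - 0))); [lra|].
  apply (jordan_outer_le_sub _ (fun x y => box 0 z (-1) 0 x y \/ box (-1) 1 0 0 x y)).
  - unfold box, Theta. intros x y [[Hx Hy] Ht]. lra.
  - apply jordan_outer_le_union; apply jordan_outer_le_box; lra.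
Qed.

Lemma jordan_outer_le_below_anti_diagonal z : 0 <= z ->
  jordan_outer_le (fun x y => (x <= z /\ y <= Rmax 0 (- x)) /\ Theta x y) (1 / 2 + z).
Proof.
  intros Hz.
  apply (jordan_outer_le_sub _ (fun x y => under_graph (fun x => 0 + -1 * x) (-1) 0 0 x y \/
                                           box 0 z (-1) 0 x y)).
  - unfold under_graph, box, Theta. intros x y [[Hx Hy] Ht].
    destruct (Rle_dec x 0); destruct Ht; [left|right|right|right]; minmax.
  - apply (jordan_outer_le_weaken _ ((0 - -1) * ((0 + -1 * -1 + (0 + -1 * 0)) / 2 - 0) +
                                      (z - 0) * (0 - -1))); [lra|].
    apply jordan_outer_le_union.
    + apply jordan_outer_le_under_affine; [lra|intros; lra].
    + apply jordan_outer_le_box; lra.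
Qed.

(* With slope [a > 0] the event is the trapezoid under [a x] over [[0, min(y1, 1/a)]]. *)
Lemma M2_positive_slope_event y1 a p : 0 < a -> in01 y1 ->
  Prob (fun x1 x2 => x1 <= y1 /\ x2 <= a * x1 /\ in01 y1 /\ in01 (a * x1)) p ->
  3 * p <= Rmin y1 (/ a) * (a * Rmin y1 (/ a) / 2 + 1).
Proof.
  intros Ha Hy1 Hp. set (m := Rmin y1 (/ a)).
  assert (Hm0 : 0 <= m) by (apply Rmin_glb; [apply Hy1|left; apply Rinv_0_lt_compat, Ha]).
  apply (Rle_trans _ ((m - 0) * ((0 + a * 0 + (0 + a * m)) / 2 - -1))); [|lra].
  apply (Prob_le_jordan _ _ _ Hp).
  apply (jordan_outer_le_sub _ (under_graph (fun x => 0 + a * x) 0 m (-1))).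
  - intros x y [[Hx [Hy [_ Hax]]] Ht]. unfold under_graph, in01, Theta in *.
    assert (x <= / a) by (apply Rmult_le_reg_l with a; [lra|]; rewrite Rinv_r; lra).
    assert (x <= m) by (apply Rmin_glb; lra). split; [split; nra|lra].
  - apply jordan_outer_le_under_affine; [lra|]. intros x Hx. nra.
Qed.

Lemma M2_linear_lower y1 a : -1 <= a -> M2 (y1, fun t => a * t) ->
  2 / 3 <= y1 /\ (y1 = 2 / 3 -> a = 3 / 2).
Proof.
  intros Ha [_ [p [Hp Hp3]]]. simpl in Hp.
  destruct (classic (in01 y1)) as [Hy1|Hy1].
  2:{ assert (3 * p <= (0 - 0) * (0 - 0)); [|lra].
      apply (Prob_le_jordan _ _ _ Hp).
      apply (jordan_outer_le_sub _ (box 0 0 0 0)); [tauto|apply jordan_outer_le_box; lra]. }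
  destruct (Rtotal_order a 0) as [Hneg|[->|Hpos]].
  - assert (3 * p <= 1 / 2 + 0); [|lra].
    apply (Prob_le_jordan _ _ _ Hp).
    refine (jordan_outer_le_sub _ _ _ _ (jordan_outer_le_below_anti_diagonal 0 ltac:(lra))).
    intros x y [[Hx [Hy [_ Hax]]] Ht]. unfold in01 in Hax.
    assert (x <= 0) by nra. split; [split; [lra|]|exact Ht]. minmax; nra.
  - assert (3 * p <= y1); [|unfold in01 in Hy1; split; lra].
    apply (Prob_le_jordan _ _ _ Hp).
    refine (jordan_outer_le_sub _ _ _ _ (jordan_outer_le_below_zero y1 ltac:(apply Hy1))).
    intros x y [[Hx [Hy _]] Ht]. repeat split; auto; lra.
  - pose proof (M2_positive_slope_event y1 a p Hpos Hy1 Hp) as Hbound.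
    set (m := Rmin y1 (/ a)) in Hbound.
    assert (Hm0 : 0 <= m) by (apply Rmin_glb; [apply Hy1|left; apply Rinv_0_lt_compat, Hpos]).
    assert (Ham : a * m <= 1).
    { replace 1 with (a * / a) by (field; lra).
      apply Rmult_le_compat_l; [lra|apply Rmin_r]. }
    assert (Hm : 2 / 3 <= m) by nra.
    split; [pose proof (Rmin_l y1 (/ a)); unfold m in Hm; lra|].
    intros ->. assert (m = 2 / 3) by (pose proof (Rmin_l (2 / 3) (/ a)); unfold m in *; lra).
    nra.
Qed.

Definition M2_minimizer : policy := (2 / 3, fun t => 3 / 2 * t).

Lemma M2_minimizer_in_M2 : M2 M2_minimizer.
Proof.
  split; [apply borel_measurable_scal|].
  destruct (Prob_exists (fun x1 x2 => x1 <= 2 / 3 /\ x2 <= 3 / 2 * x1 /\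
                                      in01 (2 / 3) /\ in01 (3 / 2 * x1))) as [p Hp].
  exists p. split; [exact Hp|].
  assert ((2 / 3 - 0) * ((0 + 3 / 2 * 0 + (0 + 3 / 2 * (2 / 3))) / 2 - -1) <= 3 * p); [|lra].
  eapply (Prob_ge_jordan _ _ _ _ _ Hp).
  apply (jordan_inner_ge_sup (under_graph (fun x => 0 + 3 / 2 * x) 0 (2 / 3) (-1))).
  - unfold under_graph, in01, Theta. intros x y [Hx Hy]. repeat split; lra.
  - apply jordan_inner_ge_under_affine; [lra|]. intros; lra.
Qed.

Lemma M1_intro y1 f x0 x1 : borel_measurable f -> in01 y1 -> (forall t, in01 (f t)) ->
  jordan_inner_ge (fun x y => (x <= y1 /\ y <= f x) /\ Theta x y) x0 x1 1 -> M1 (y1, f).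
Proof.
  intros Hf Hy1 Hf01 Hin. split; [exact Hf|split; [|split; [exact Hy1|]]].
  - destruct (Prob_exists (fun x1 x2 => x1 <= y1 /\ x2 <= f x1)) as [p Hp].
    exists p. split; [exact Hp|]. pose proof (Prob_ge_jordan _ _ _ _ _ Hp Hin). lra.
  - apply Prob_null. intros x y _ H. apply H, Hf01.
Qed.

Lemma M1_linear_lower y1 a : M1 (y1, fun t => a * t) -> 1 <= y1.
Proof.
  intros [_ [[p [Hp Hp3]] [Hy1 Has]]]. simpl in Hp, Hy1, Has. unfold in01 in Hy1.
  assert (Ha : a = 0).
  { unfold almost_surely in Has.
    destruct (Rtotal_order a 0) as [Hneg|[Hz|Hpos]]; auto; exfalso.
    - assert ((1 - 1 / 2) * (1 - 0) <= 3 * 0); [|lra].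
      eapply (Prob_ge_jordan _ _ _ _ _ Has).
      apply (jordan_inner_ge_sup (box (1 / 2) 1 0 1)); [|apply jordan_inner_ge_box; lra].
      unfold box, in01, Theta. intros x y Hxy. split; [nra|lra].
    - assert ((- 1 / 2 - -1) * (1 - 0) <= 3 * 0); [|lra].
      eapply (Prob_ge_jordan _ _ _ _ _ Has).
      apply (jordan_inner_ge_sup (box (-1) (- 1 / 2) 0 1)); [|apply jordan_inner_ge_box; lra].
      unfold box, in01, Theta. intros x y Hxy. split; [nra|lra]. }
  subst a. assert (3 * p <= y1); [|lra].
  apply (Prob_le_jordan _ _ _ Hp).
  refine (jordan_outer_le_sub _ _ _ _ (jordan_outer_le_below_zero y1 ltac:(lra))).
  intros x y [[Hx Hy] Ht]. repeat split; auto; lra.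
Qed.

Lemma M1_Pi_linear_lower y1 a : -1 <= a -> M1 (Pi (y1, fun t => a * t)) -> 1 / 2 <= clamp y1.
Proof.
  intros Ha [_ [[p [Hp Hp3]] [Hz _]]]. simpl in Hp, Hz. unfold in01 in Hz.
  set (z := clamp y1) in *.
  apply Rnot_lt_le. intros Hlt.
  destruct (Rle_dec 0 a) as [Hpos|Hneg].
  - assert (3 * p <= (0 - -1) * (0 - 0) + (z - 0) * (1 - -1)); [|lra].
    apply (Prob_le_jordan _ _ _ Hp).
    apply (jordan_outer_le_sub _ (fun x y => box (-1) 0 0 0 x y \/ box 0 z (-1) 1 x y)).
    + intros x y [[Hx Hy] Ht]. unfold box, Theta in *.
      destruct (Rle_dec x 0); [|lra].
      assert (clamp (a * x) = 0) by (unfold clamp; assert (a * x <= 0) by nra; minmax). lra.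
    + apply jordan_outer_le_union; apply jordan_outer_le_box; lra.
  - assert (3 * p <= 1 / 2 + z); [|lra].
    apply (Prob_le_jordan _ _ _ Hp).
    refine (jordan_outer_le_sub _ _ _ _ (jordan_outer_le_below_anti_diagonal z ltac:(lra))).
    intros x y [[Hx Hy] Ht]. split; [split; [lra|]|exact Ht].
    unfold clamp in Hy. destruct (Rle_dec x 0); [|assert (a * x <= 0) by nra]; minmax; nra.
Qed.

Lemma M1_const_one : M1 (0, fun _ => 1).
Proof.
  apply (M1_intro _ _ (-1) 0); [apply borel_measurable_const|unfold in01; lra|unfold in01; intros; lra|].
  apply (jordan_inner_ge_weaken _ _ _ ((0 - -1) * (1 - 0))); [lra|].
  apply (jordan_inner_ge_sup (box (-1) 0 0 1)); [|apply jordan_inner_ge_box; lra].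
  unfold box, Theta. intros x y Hxy. lra.
Qed.

Lemma M1_const_zero : M1 (1, fun _ => 0).
Proof.
  apply (M1_intro _ _ 0 1); [apply borel_measurable_const|unfold in01; lra|unfold in01; intros; lra|].
  apply (jordan_inner_ge_weaken _ _ _ ((1 - 0) * (0 - -1))); [lra|].
  apply (jordan_inner_ge_sup (box 0 1 (-1) 0)); [|apply jordan_inner_ge_box; lra].
  unfold box, Theta. intros x y Hxy. lra.
Qed.

Definition M1_Pi_minimizer : policy := (1 / 2, fun t => Rmax 0 (Rmin (- t) 1)).

Lemma M1_Pi_minimizer_eq : M1_Pi_minimizer = Pi (1 / 2, fun t => - t).
Proof. unfold M1_Pi_minimizer, Pi. simpl. rewrite clamp_id; [reflexivity|unfold in01; lra]. Qed.

Lemma M1_Pi_minimizer_in_M1 : M1 M1_Pi_minimizer.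
Proof.
  apply (M1_intro _ _ (-1) (1 / 2)); [|unfold in01; lra|intros; apply clamp_in01|].
  - apply (borel_measurable_ext (fun t => clamp (-1 * t))); [intros; unfold clamp; f_equal; f_equal; ring|].
    apply (borel_measurable_comp (fun t => -1 * t) clamp);
      [apply borel_measurable_scal|apply borel_measurable_clamp].
  - apply (jordan_inner_ge_weaken _ _ _ ((0 - -1) * ((0 + -1 * -1 + (0 + -1 * 0)) / 2 - 0) +
                                         (1 / 2 - 0) * (0 - -1))); [lra|].
    apply (jordan_inner_ge_sup (fun x y => under_graph (fun x => 0 + -1 * x) (-1) 0 0 x y \/
                                           box 0 (1 / 2) (-1) 0 x y)).
    + unfold under_graph, box, Theta. intros x y [Hxy|Hxy]; minmax.
    + apply (jordan_inner_ge_adjacent _ _ _ 0).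
      * apply jordan_inner_ge_under_affine; [lra|intros; lra].
      * apply jordan_inner_ge_box; lra.
Qed.

Lemma M2_minimizer_argmin : argmin_h (inter M2 K) M2_minimizer.
Proof.
  split; [split; [apply M2_minimizer_in_M2|exists (3 / 2); split; [lra|reflexivity]]|].
  intros y [HM HK]. destruct (K_linear y HK) as [a [Ha Hy]]. rewrite Hy in HM.
  destruct (M2_linear_lower _ _ Ha HM). unfold h; simpl. lra.
Qed.

Lemma M2_minimizer_unique y : argmin_h (inter M2 K) y -> y = M2_minimizer.
Proof.
  intros [[HM HK] Hmin]. destruct (K_linear y HK) as [a [Ha Hy]]. rewrite Hy in HM |- *.
  destruct (M2_linear_lower _ _ Ha HM) as [H1 H2].
  pose proof (Hmin _ (proj1 M2_minimizer_argmin)) as H3. unfold h in H3; simpl in H3.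
  assert (Hy1 : fst y = 2 / 3) by lra. rewrite Hy1, (H2 Hy1). reflexivity.
Qed.

Lemma Pi_M2_minimizer : Pi M2_minimizer = (2 / 3, fun t => Rmax 0 (Rmin (3 / 2 * t) 1)).
Proof. unfold Pi, M2_minimizer; simpl. rewrite clamp_id; [reflexivity|unfold in01; lra]. Qed.

Lemma phi_zero : phi 0.
Proof.
  apply is_glb_min; [exists (0, fun _ => 1); split; [apply M1_const_one|reflexivity]|].
  intros v [y [[_ [_ [Hy _]]] ->]]. unfold h, in01 in *. lra.
Qed.

Lemma phi1_one : phi1 1.
Proof.
  apply is_glb_min.
  - exists (1, fun _ => 0). split; [|reflexivity].
    split; [apply M1_const_zero|exists 0; split; [lra|intros; simpl; ring]].
  - intros v [y [[HM HK] ->]]. destruct (K_linear y HK) as [a [_ Hy]]. rewrite Hy in HM.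
    exact (M1_linear_lower _ _ HM).
Qed.

Lemma phi2_two_thirds : phi2 (2 / 3).
Proof.
  apply is_glb_min.
  - exists (Pi M2_minimizer). split; [exists M2_minimizer; split; [apply M2_minimizer_argmin|reflexivity]|].
    rewrite Pi_M2_minimizer. reflexivity.
  - intros v [z [[y [Hy ->]] ->]]. rewrite (M2_minimizer_unique y Hy), Pi_M2_minimizer. unfold h; simpl. lra.
Qed.

Lemma phi3_two_thirds : phi3 (2 / 3).
Proof.
  apply is_glb_min.
  - exists (Pi M2_minimizer). split; [exists M2_minimizer; split; [apply M2_minimizer_argmin|reflexivity]|].
    rewrite Pi_M2_minimizer. reflexivity.
  - intros v [z [[y [[HM HK] ->]] ->]]. destruct (K_linear y HK) as [a [Ha Hy]]. rewrite Hy in HM |- *.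
    destruct (M2_linear_lower _ _ Ha HM) as [H _].
    unfold h, Pi, clamp; simpl. minmax.
Qed.

Lemma phi4_half : phi4 (1 / 2).
Proof.
  apply is_glb_min.
  - exists M1_Pi_minimizer. split; [|reflexivity]. split; [apply M1_Pi_minimizer_in_M1|].
    exists (1 / 2, fun t => - t). split; [|apply M1_Pi_minimizer_eq].
    exists (-1). split; [lra|intros; simpl; ring].
  - intros v [z [[HM [y [HK ->]]] ->]]. destruct (K_linear y HK) as [a [Ha Hy]]. rewrite Hy in HM |- *.
    exact (M1_Pi_linear_lower _ _ Ha HM).
Qed.

Theorem mainTheorem3 :
  phi 0 /\ phi1 1 /\ phi2 (2/3) /\ phi3 (2/3) /\ phi4 (1/2) /\
  (* (2/3, 3/2 xi1) is the unique minimizer of h over M2 cap K *)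
  argmin_h (inter M2 K) (2/3, fun t => 3/2 * t) /\
  (forall y, argmin_h (inter M2 K) y -> y = (2/3, fun t => 3/2 * t)) /\
  (* its projection solves the problem defining phi3 *)
  Pi (2/3, fun t => 3/2 * t) = (2/3, fun t => Rmax 0 (Rmin (3/2 * t) 1)) /\
  image_Pi (inter M2 K) (Pi (2/3, fun t => 3/2 * t)) /\
  h (Pi (2/3, fun t => 3/2 * t)) = 2/3 /\
  (* phi4 is attained at (1/2, clamp(-xi1)) = Pi(1/2, -xi1) *)
  (1/2, fun t => Rmax 0 (Rmin (- t) 1)) = Pi (1/2, fun t => - t) /\
  inter M1 (image_Pi K) (1/2, fun t => Rmax 0 (Rmin (- t) 1)) /\
  h (1/2, fun t => Rmax 0 (Rmin (- t) 1)) = 1/2.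
Proof.
  split; [exact phi_zero|split; [exact phi1_one|split; [exact phi2_two_thirds|]]].
  split; [exact phi3_two_thirds|split; [exact phi4_half|]].
  split; [exact M2_minimizer_argmin|split; [exact M2_minimizer_unique|]].
  split; [exact Pi_M2_minimizer|].
  split; [exists M2_minimizer; split; [apply M2_minimizer_argmin|reflexivity]|].
  split; [change (h (Pi M2_minimizer) = 2 / 3); rewrite Pi_M2_minimizer; reflexivity|].
  split; [exact M1_Pi_minimizer_eq|].
  split; [|reflexivity].
  split; [exact M1_Pi_minimizer_in_M1|].
  exists (1 / 2, fun t => - t). split; [|exact M1_Pi_minimizer_eq].
  exists (-1). split; [lra|intros; simpl; ring].
Qed.
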